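(* Let $\mu$ be a positive even integer, $h>0$, $t\ge 0$, and for $K\in\mathbb{N}$ and $k\in\{1,\dots,K-1\}$ define $$F_\mu(t,h,k,K)=\left(\frac{k!\,(K-k)!}{\prod_{\kappa=1}^K(K-k+\kappa)+(K+1)^K\left(\frac{t}{h}\right)^K}\right)^{\mu}.$$ Then for every $K\in\mathbb{N}$ and every $k=1,\dots,K-1$, $$F_\mu(t,h,k,K)\le F_\mu(t,h,K-1,K).$$ *)

From mathcomp Require Import all_boot all_order all_algebra.
From mathcomp Require Import reals.
Set Implicit Arguments. Unset Strict Implicit. Unset Printing Implicit Defensive.
Import Order.TTheory GRing.Theory Num.Theory.
Local Open Scope ring_scope.

Definition F (R : realType) (mu : nat) (t h : R) (k K : nat) : R :=
  ((k`!)%:R * ((K - k)`!)%:R /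
     ((\prod_(1 <= kappa < K.+1) (K - k + kappa)%N)%:R
      + (K.+1)%:R ^+ K * (t / h) ^+ K)) ^+ mu.

(** Write [K = k + j] with [j >= 1] and [C = (K+1)^K (t/h)^K >= 0].  The
    denominators are [(K+j)!/j! + C] and [(K+1)! + C], so the claim has the shape
    [a / (b + C) <= a' / (b' + C)] with [a = k! j!] and [a' = (K-1)!], which holds
    as soon as [a <= a'] and [a b' <= a' b].  Both reduce to the bound
    [n <= 'C(n, m)] for [0 < m < n]: [K! = 'C(K, k) k! j!] gives [K k! j! <= K!],
    and [(K+j)! = 'C(K+j, j) 'C(K, k) j! k! j!] gives [(K+j) K k! j! j! <= (K+j)!].
    Both bases are nonnegative. *)
From mathcomp Require Import all_boot all_order all_algebra.
From mathcomp Require Import reals.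
From mathcomp Require Import zify.
Import Order.TTheory GRing.Theory Num.Theory.

Local Open Scope ring_scope.

Lemma leq_bin n m : (0 < m < n)%N -> (n <= 'C(n, m))%N.
Proof.
elim: n m => [|n IHn] [|[|m]] //; first by rewrite bin1.
rewrite ltnS => /andP[_ lt_m_n].
by rewrite binS addnC -addn1 leq_add ?IHn ?bin_gt0.
Qed.

Lemma prod_addn_fact m n :
  (\prod_(1 <= i < n.+1) (m + i) * m`! = (m + n)`!)%N.
Proof.
elim: n => [|n IHn]; first by rewrite big_geq // mul1n addn0.
by rewrite big_nat_recr //= mulnAC IHn addnS factS mulnC.
Qed.

Section FactorialBounds.

Variables k j : nat.
Hypotheses (k_gt0 : (0 < k)%N) (j_gt0 : (0 < j)%N).

Lemma factD_bin : ((k + j)`! = 'C(k + j, k) * (k`! * j`!))%N.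
Proof. by rewrite -(bin_fact (leq_addr j k)) addKn. Qed.

Lemma leq_factM_pred : (k`! * j`! <= (k + j).-1`!)%N.
Proof.
have KE : (k + j = (k + j).-1.+1)%N by lia.
rewrite -(leq_pmul2l (_ : 0 < k + j)%N) ?addn_gt0 ?k_gt0 //.
rewrite [X in (_ <= X * _)%N]KE -factS -KE factD_bin leq_mul2r leq_bin ?orbT //.
lia.
Qed.

Lemma leq_factMM :
  ((k + j + j) * (k + j) * (k`! * j`! * j`!) <= (k + j + j)`!)%N.
Proof.
have -> : ((k + j + j)`! = 'C(k + j + j, j) * (j`! * (k + j)`!))%N.
  by rewrite -(bin_fact (leq_addl (k + j) j)) addnK.
have -> : ((k + j + j) * (k + j) * (k`! * j`! * j`!)
           = (k + j + j) * (j`! * ((k + j) * (k`! * j`!))))%N by lia.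
rewrite factD_bin !leq_mul ?leq_bin //; lia.
Qed.

Lemma leq_factM_prod :
  (k`! * j`! * \prod_(1 <= i < (k + j).+1) (1 + i)
     <= (k + j).-1`! * \prod_(1 <= i < (k + j).+1) (j + i))%N.
Proof.
have P1E : (\prod_(1 <= i < (k + j).+1) (j + i) * j`! = (k + j + j)`!)%N.
  by rewrite prod_addn_fact addnC.
have P2E : (\prod_(1 <= i < (k + j).+1) (1 + i) = (k + j).+1`!)%N.
  by have := prod_addn_fact 1 (k + j); rewrite muln1 add1n.
rewrite -(leq_pmul2r (fact_gt0 j)) -[X in (_ <= X)%N]mulnA P1E P2E.
have [K KE] : exists K, (k + j = K.+1)%N by exists (k + j).-1; lia.
have := leq_factMM; rewrite KE /= !factS => le_fact.
apply: leq_trans (_ : _ <= K`! * ((K.+1 + j) * K.+1 * (k`! * j`! * j`!)))%N _.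
  by have := fact_gt0 K; nia.
by rewrite leq_mul2l le_fact orbT.
Qed.

End FactorialBounds.

Lemma ler_div_addden (R : numFieldType) (a a' b b' c : R) :
  0 < b -> 0 < b' -> 0 <= c -> a <= a' -> a * b' <= a' * b ->
  a / (b + c) <= a' / (b' + c).
Proof.
move=> b_gt0 b'_gt0 c_ge0 le_a le_ab.
rewrite ler_pdivrMr ?ltr_wpDr // mulrAC ler_pdivlMr ?ltr_wpDr //.
by rewrite !mulrDr lerD // ler_wpM2r.
Qed.

Theorem proposition1 (R : realType) (mu : nat) (t h : R) :
  (0 < mu)%N -> ~~ odd mu -> 0 < h -> 0 <= t ->
  forall K k : nat, (1 <= k)%N -> (k <= K - 1)%N ->
    F mu t h k K <= F mu t h (K - 1) K.
Proof.
move=> _ _ h_gt0 t_ge0 K k k_gt0 le_k.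
have [j j_gt0 ->] : exists2 j, (0 < j)%N & K = (k + j)%N by exists (K - k)%N; lia.
rewrite /F addKn (_ : k + j - (k + j - 1) = 1)%N ?subn1; last by lia.
set C := _ ^+ _ * _.
have C_ge0 : 0 <= C by rewrite /C mulr_ge0 // exprn_ge0 // divr_ge0 // ltW.
apply: lerXn2r; rewrite ?nnegrE ?divr_ge0 ?addr_ge0 // ?mulr_ge0 //.
apply: ler_div_addden => //.
- by rewrite ltr0n prodn_gt0 // => i; rewrite addn_gt0 j_gt0.
- by rewrite ltr0n prodn_gt0.
- by rewrite -!natrM ler_nat muln1 leq_factM_pred.
- by rewrite -!natrM ler_nat muln1 leq_factM_prod.
Qed.
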